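(* Let $a_{ij}>0$ ($i,j=1,2$) and $b_1,b_2>0$, and assume (A1) $\langle Ax,x\rangle>0$ for all $x\in\mathbb{R}^2\setminus\{0\}$, where $A=(a_{ij})$, and (A2) the matrix $\begin{pmatrix}b_1a_{11}&b_1a_{12}\\ b_2a_{21}&b_2a_{22}\end{pmatrix}$ has two real positive eigenvalues. Consider, for $\lambda>0$, $\alpha\in[0,1]$, $\tau>0$, the problem $$\dot x_1(t)=-\alpha\lambda\big(a_{11}x_1(t-\tau/\lambda)+a_{12}x_2(t-\tau/\lambda)\big)(b_1+x_1(t)),$$ $$\dot x_2(t)=-\alpha\lambda\big(a_{21}x_1(t-\tau/\lambda)+a_{22}x_2(t-\tau/\lambda)\big)(b_2+x_2(t)).\qquad (\ast)$$ Let $\lambda_1,\lambda_2\in\mathbb{R}^+$ with $\lambda_1<\lambda_2$. Then: (1) there exist positive numbers $m_0,d_1,d_2,d_3,d_4$ such that for each $\lambda\in[\lambda_1,\lambda_2]$, $\alpha\in[0,1]$ and $\tau\ge 1$, every solution $(x_1,x_2)\in\Theta_0$ of $(\ast)$ satisfies $|\dot x_i|_\infty<m_0$ and $|\ddot x_i|_\infty<m_0$ for $i=1,2$, and $$-b_1<-d_1<x_1(t)<d_3,\qquad -b_2<-d_2<x_2(t)<d_4\quad\text{for all }t\in[0,2\pi];$$ (2) there exists $\alpha_0\in(0,1)$ such that for $\alpha\in[0,\alpha_0]$ (and $\lambda\in[\lambda_1,\lambda_2]$) problem $(\ast)$ has no nontrivial solution $(x_1,x_2)\in\Theta_0$.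
   Context: $\hat E$ denotes the Banach space of functions $x\in C([0,2\pi],\mathbb{R})$ with $\int_0^{2\pi}\dot x(t)^2\,dt<\infty$, $x(0)=x(2\pi)$ and $\int_0^{2\pi}x(t)\,dt=0$, with norm $\|x\|^2=\int_0^{2\pi}(\dot x(t)^2+x(t)^2)\,dt$; such functions are identified with their $2\pi$-periodic extensions to $\mathbb{R}$. $E=\hat E\times\hat E$, and $\Theta_0=\{(x_1,x_2)\in E: x_i(t)>-b_i \text{ for } t\in[0,2\pi],\ i=1,2\}$. $|u|_\infty=\sup_{t\in[0,2\pi]}|u(t)|$. A solution of $(\ast)$ is a pair in $E$ satisfying the equations for all $t$; nontrivial means not identically zero. *)

From Stdlib Require Import Reals.
From Coquelicot Require Import Coquelicot.
Open Scope R_scope.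

(* Elements of \hat E, identified with their 2*PI-periodic extensions to R.
   The H^1 condition is expressed with the classical derivative (solutions of
   ( * ) are differentiable everywhere, so this is the derivative in question). *)
Definition in_Ehat (x : R -> R) : Prop :=
  (forall t, continuous x t) /\
  (forall t, x (t + 2 * PI) = x t) /\
  RInt x 0 (2 * PI) = 0 /\
  ex_RInt (fun t => (Derive x t) ^ 2) 0 (2 * PI).

Definition in_Theta0 (b1 b2 : R) (x1 x2 : R -> R) : Prop :=
  forall t, 0 <= t <= 2 * PI -> -b1 < x1 t /\ -b2 < x2 t.

Definition supnorm_lt (u : R -> R) (m : R) : Prop :=
  exists c, c < m /\ forall t, 0 <= t <= 2 * PI -> Rabs (u t) <= c.

Definition is_solution (a11 a12 a21 a22 b1 b2 lam alpha tau : R)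
    (x1 x2 : R -> R) : Prop :=
  in_Ehat x1 /\ in_Ehat x2 /\
  forall t,
    is_derive x1 t
      (- alpha * lam * (a11 * x1 (t - tau / lam) + a12 * x2 (t - tau / lam))
         * (b1 + x1 t)) /\
    is_derive x2 t
      (- alpha * lam * (a21 * x1 (t - tau / lam) + a22 * x2 (t - tau / lam))
         * (b2 + x2 t)).

Definition cond_A1 (a11 a12 a21 a22 : R) : Prop :=
  forall y1 y2 : R, (y1 <> 0 \/ y2 <> 0) ->
    (a11 * y1 + a12 * y2) * y1 + (a21 * y1 + a22 * y2) * y2 > 0.

(* (A2): the matrix [[b1 a11, b1 a12],[b2 a21, b2 a22]] has two real positive
   eigenvalues, i.e. its characteristic polynomial det(M - z I) factors as
   (z - mu1)(z - mu2) with mu1, mu2 > 0 real. *)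
Definition cond_A2 (a11 a12 a21 a22 b1 b2 : R) : Prop :=
  exists mu1 mu2 : R, 0 < mu1 /\ 0 < mu2 /\
    forall z : R,
      (b1 * a11 - z) * (b2 * a22 - z) - (b1 * a12) * (b2 * a21)
      = (z - mu1) * (z - mu2).

From Stdlib Require Import Reals Lra Psatz.
From Coquelicot Require Import Coquelicot.
Open Scope R_scope.

(** For a solution in Theta_0 each b_i + x_i is positive, and ln (b_i + x_i)
    has derivative -alpha lam (a_i1 x_1 + a_i2 x_2)(t - tau/lam), bounded above
    by lam_2 (a_i1 b_1 + a_i2 b_2) since x_j > -b_j.  Having zero mean, x_i
    takes both signs, so ln (b_i + x_i) stays within 2 pi times that bound of
    ln b_i; this bounds x_i above and away from -b_i, and the equations then
    bound x_i' and x_i''.  For (2): if |x_j| <= m for both j, then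
    |x_i'| <= alpha K m with K independent of alpha, and since x_i changes sign
    |x_i| <= 2 pi alpha K m <= m / 2 for alpha small; halving forever gives
    x = 0. *)

Lemma periodic_IZR (f : R -> R) (P : R) :
  (forall t, f (t + P) = f t) -> forall (n : Z) t, f (t + IZR n * P) = f t.
Proof.
  intros Hper n; induction n as [|n IH|n IH] using Z.peano_ind; intro t.
  - f_equal; ring.
  - rewrite succ_IZR, <- (IH t), <- (Hper (t + IZR n * P)); f_equal; ring.
  - rewrite <- (IH t), <- Z.sub_1_r, minus_IZR, <- (Hper (t + (IZR n - 1) * P)).
    f_equal; ring.
Qed.

Lemma periodic_range (f : R -> R) (P : R) :
  0 < P -> (forall t, f (t + P) = f t) ->
  forall t, exists u, 0 <= u <= P /\ f t = f u.
Proof.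
  intros HP Hper t.
  set (n := Zfloor (t / P)).
  exists (t - IZR n * P); split.
  - destruct (Zfloor_bound (t / P)) as [Hlo Hhi]; fold n in Hlo, Hhi.
    apply Rmult_le_compat_r with (r := P) in Hlo; [|lra].
    apply Rmult_lt_compat_r with (r := P) in Hhi; [|lra].
    unfold Rdiv in *; rewrite Rmult_assoc, Rinv_l, Rmult_1_r in Hlo, Hhi by lra.
    lra.
  - rewrite <- (periodic_IZR f P Hper n (t - IZR n * P)); f_equal; ring.
Qed.

Lemma is_derive_sub_le (f df : R -> R) (C u t : R) :
  (forall r, is_derive f r (df r)) -> (forall r, df r <= C) -> u <= t ->
  f t - f u <= C * (t - u).
Proof.
  intros Hf Hdf Hut.
  destruct (MVT_gen f u t df) as [c [_ ->]].
  - intros r _; apply Hf.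
  - intros r _; apply continuity_pt_filterlim, (ex_derive_continuous f r).
    exists (df r); apply Hf.
  - apply Rmult_le_compat_r; [lra | apply Hdf].
Qed.

Lemma periodic_oscillation_le (f df : R -> R) (P C : R) :
  0 < P -> 0 <= C -> (forall t, f (t + P) = f t) ->
  (forall r, is_derive f r (df r)) -> (forall r, df r <= C) ->
  forall t u, f t <= f u + P * C.
Proof.
  intros HP HC Hper Hf Hdf t u.
  (* a representative of t in [u, u + P] *)
  destruct (periodic_range (fun r => f (u + r)) P HP) with (t := t - u)
    as [r [Hr Hfr]].
  { intro r; rewrite <- Rplus_assoc; apply Hper. }
  replace (u + (t - u)) with t in Hfr by ring.
  rewrite Hfr.
  pose proof (is_derive_sub_le f df C u (u + r) Hf Hdf ltac:(lra)).
  nra.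
Qed.

Lemma periodic_crossing_bounds (f df : R -> R) (P C c u v : R) :
  0 < P -> 0 <= C -> (forall t, f (t + P) = f t) ->
  (forall r, is_derive f r (df r)) -> (forall r, df r <= C) ->
  f u <= c -> c <= f v ->
  forall t, c - P * C <= f t <= c + P * C.
Proof.
  intros HP HC Hper Hf Hdf Hu Hv t.
  pose proof (periodic_oscillation_le f df P C HP HC Hper Hf Hdf t u).
  pose proof (periodic_oscillation_le f df P C HP HC Hper Hf Hdf v t).
  lra.
Qed.

Lemma RInt_eq0_crossing (x : R -> R) (a b : R) :
  a < b -> (forall t, a <= t <= b -> continuous x t) -> RInt x a b = 0 ->
  (exists u, x u <= 0) /\ (exists v, 0 <= x v).
Proof.
  intros Hab Hx HI.
  split; apply Classical_Prop.NNPP; intro Hno.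
  - assert (0 < RInt x a b); [|lra].
    apply RInt_gt_0; auto.
    intros t _; apply Rnot_le_lt; intro; apply Hno; now exists t.
  - assert (Hopp : RInt (fun t => - x t) a b = - RInt x a b).
    { apply (RInt_opp x a b), ex_RInt_continuous; intros t Ht; apply Hx.
      rewrite Rmin_left, Rmax_right in Ht; lra. }
    assert (0 < RInt (fun t => - x t) a b); [|lra].
    apply RInt_gt_0; auto.
    + intros t _. cut (~ 0 <= x t); [lra|]. intro; apply Hno; now exists t.
    + intros t Ht; apply (continuous_opp x), Hx, Ht.
Qed.

Lemma exp_le_exp (x y : R) : x <= y -> exp x <= exp y.
Proof.
  intros [Hlt | ->]; [left; apply exp_increasing, Hlt | apply Rle_refl].
Qed.

Lemma periodic_log_crossing_bounds (z g : R -> R) (P b C u v : R) :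
  0 < P -> 0 <= C -> (forall t, 0 < b + z t) -> (forall t, z (t + P) = z t) ->
  (forall t, is_derive z t (g t * (b + z t))) -> (forall t, g t <= C) ->
  z u <= 0 -> 0 <= z v ->
  forall t, b * exp (- (P * C)) <= b + z t <= b * exp (P * C).
Proof.
  intros HP HC Hpos Hper Hz Hg Hu Hv t.
  assert (Hb : 0 < b) by (specialize (Hpos u); lra).
  assert (Hlog : forall r, is_derive (fun r => ln (b + z r)) r (g r)).
  { intro r; auto_derive.
    - split; [exists (g r * (b + z r)); apply Hz | split; [apply Hpos | exact I]].
    - rewrite (is_derive_unique (fun x : R => z x) r _ (Hz r)); field.
      specialize (Hpos r); lra. }
  destruct (periodic_crossing_bounds (fun r => ln (b + z r)) g P C (ln b) u v HP HC)
    with (t := t) as [Hlo Hhi]; auto.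
  - intro r; rewrite Hper; reflexivity.
  - apply ln_le; [apply Hpos | lra].
  - apply ln_le; lra.
  - replace (b * exp (- (P * C))) with (exp (ln b - P * C))
      by (unfold Rminus; rewrite exp_plus, exp_ln; auto).
    replace (b * exp (P * C)) with (exp (ln b + P * C))
      by (rewrite exp_plus, exp_ln; auto).
    rewrite <- (exp_ln (b + z t)) by apply Hpos.
    split; apply exp_le_exp; assumption.
Qed.

Lemma Rabs_mult_le (x y X Y : R) : Rabs x <= X -> Rabs y <= Y -> Rabs (x * y) <= X * Y.
Proof.
  intros Hx Hy; rewrite Rabs_mult.
  apply Rmult_le_compat; auto using Rabs_pos.
Qed.

Lemma Rabs_lincomb_le (c e x y A B : R) :
  0 <= c -> 0 <= e -> c + e <= A -> Rabs x <= B -> Rabs y <= B ->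
  Rabs (c * x + e * y) <= A * B.
Proof.
  intros Hc He HA Hx Hy.
  apply Rabs_le_between in Hx; apply Rabs_le_between in Hy.
  apply Rabs_le_between; split; nra.
Qed.

Lemma halving_bound_eq0 (Q : R -> Prop) (B w : R) :
  Q B -> (forall m, Q m -> Q (m / 2)) -> (forall m, Q m -> Rabs w <= m) -> w = 0.
Proof.
  intros HB Hhalf Hw.
  assert (Hn : forall n, Q ((/ 2) ^ n * B)).
  { induction n as [|n IH]; simpl.
    - rewrite Rmult_1_l; exact HB.
    - replace (/ 2 * (/ 2) ^ n * B) with ((/ 2) ^ n * B / 2) by field.
      apply Hhalf, IH. }
  assert (Hlim : Rbar_le (Rabs w) 0).
  { apply (is_lim_seq_le (fun _ => Rabs w) (fun n => (/ 2) ^ n * B)).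
    - intro n; apply Hw, Hn.
    - apply is_lim_seq_const.
    - replace (Finite 0) with (Rbar_mult 0 B) by (simpl; f_equal; ring).
      apply is_lim_seq_scal_r, is_lim_seq_geom.
      rewrite Rabs_pos_eq; lra. }
  simpl in Hlim; pose proof (Rabs_pos w).
  apply Rabs_eq_0; lra.
Qed.

Definition delay_rhs (k c e b : R) (x1 x2 y : R -> R) (s t : R) : R :=
  k * (c * x1 (t - s) + e * x2 (t - s)) * (b + y t).

Lemma is_derive_delay_rhs (k c e b s t : R) (x1 x2 y : R -> R) :
  ex_derive x1 (t - s) -> ex_derive x2 (t - s) -> ex_derive y t ->
  is_derive (delay_rhs k c e b x1 x2 y s) t
    (k * ((c * Derive x1 (t - s) + e * Derive x2 (t - s)) * (b + y t)
          + (c * x1 (t - s) + e * x2 (t - s)) * Derive y t)).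
Proof.
  intros; unfold delay_rhs; auto_derive; [tauto|].
  (* [auto_derive] leaves eta-expanded [Derive (fun x => f x)], which [ring]
     would treat as atoms distinct from [Derive f]. *)
  repeat match goal with
         | |- context [Derive ?g _] => lazymatch g with fun x => ?f x => change g with f end
         end.
  unfold Rminus; ring.
Qed.

Lemma Rabs_delay_rhs_le (k c e b s t K A B W : R) (x1 x2 y : R -> R) :
  Rabs k <= K -> 0 <= c -> 0 <= e -> c + e <= A ->
  Rabs (x1 (t - s)) <= B -> Rabs (x2 (t - s)) <= B -> Rabs (b + y t) <= W ->
  Rabs (delay_rhs k c e b x1 x2 y s t) <= K * (A * B) * W.
Proof.
  intros; unfold delay_rhs.
  apply Rabs_mult_le; [apply Rabs_mult_le|]; auto using Rabs_lincomb_le.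
Qed.

Lemma Rabs_Derive_delay_rhs_le (k c e b s t K A B W D : R) (x1 x2 y : R -> R) :
  ex_derive x1 (t - s) -> ex_derive x2 (t - s) -> ex_derive y t ->
  Rabs k <= K -> 0 <= c -> 0 <= e -> c + e <= A ->
  Rabs (x1 (t - s)) <= B -> Rabs (x2 (t - s)) <= B -> Rabs (b + y t) <= W ->
  Rabs (Derive x1 (t - s)) <= D -> Rabs (Derive x2 (t - s)) <= D ->
  Rabs (Derive y t) <= D ->
  Rabs (Derive (delay_rhs k c e b x1 x2 y s) t) <= K * (A * D * W + A * B * D).
Proof.
  intros Hx1 Hx2 Hy; intros.
  rewrite (is_derive_unique _ _ _ (is_derive_delay_rhs k c e b s t x1 x2 y Hx1 Hx2 Hy)).
  apply Rabs_mult_le; auto.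
  eapply Rle_trans; [apply Rabs_triang|].
  apply Rplus_le_compat; apply Rabs_mult_le; auto using Rabs_lincomb_le.
Qed.

Section APrioriBounds.

Variables a11 a12 a21 a22 b1 b2 lam2 : R.
Hypotheses (Ha11 : 0 < a11) (Ha12 : 0 < a12) (Ha21 : 0 < a21) (Ha22 : 0 < a22)
  (Hb1 : 0 < b1) (Hb2 : 0 < b2) (Hlam2 : 0 < lam2).

Definition log_slope_bound : R :=
  lam2 * (a11 * b1 + a12 * b2 + (a21 * b1 + a22 * b2)).
Definition coef_sum : R := a11 + a12 + a21 + a22.
Definition sol_bound : R := (b1 + b2) * exp (2 * PI * log_slope_bound).
Definition deriv_bound : R := lam2 * (coef_sum * sol_bound) * sol_bound.
Definition deriv2_bound : R :=
  lam2 * (coef_sum * deriv_bound * sol_bound + coef_sum * sol_bound * deriv_bound).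
Definition contraction_rate : R := 2 * PI * lam2 * coef_sum * sol_bound.

Lemma log_slope_bound_ge0 : 0 <= log_slope_bound.
Proof. unfold log_slope_bound; apply Rmult_le_pos; nra. Qed.

Lemma exp_log_slope_ge1 : 1 <= exp (2 * PI * log_slope_bound).
Proof.
  rewrite <- exp_0; apply exp_le_exp.
  pose proof PI_RGT_0; pose proof log_slope_bound_ge0; nra.
Qed.

Lemma sol_bound_pos : 0 < sol_bound.
Proof. unfold sol_bound; pose proof exp_log_slope_ge1; nra. Qed.

Lemma deriv_bounds_ge0 : 0 <= deriv_bound /\ 0 <= deriv2_bound.
Proof.
  assert (Hsb : 0 <= sol_bound) by (left; exact sol_bound_pos).
  assert (Hcs : 0 <= coef_sum) by (unfold coef_sum; lra).
  assert (Hl : 0 <= lam2) by lra.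
  assert (HD : 0 <= deriv_bound).
  { exact (Rmult_le_pos _ _ (Rmult_le_pos _ _ Hl (Rmult_le_pos _ _ Hcs Hsb)) Hsb). }
  split; [exact HD|].
  exact (Rmult_le_pos _ _ Hl (Rplus_le_le_0_compat _ _
           (Rmult_le_pos _ _ (Rmult_le_pos _ _ Hcs HD) Hsb)
           (Rmult_le_pos _ _ (Rmult_le_pos _ _ Hcs Hsb) HD))).
Qed.

Lemma supnorm_lt_of_le (u : R -> R) (c m : R) :
  (forall t, Rabs (u t) <= c) -> c < m -> supnorm_lt u m.
Proof. intros Hu Hc; exists c; auto. Qed.

Section Solution.

Variables lam alpha tau : R.
Variables x1 x2 : R -> R.
Hypotheses (Hlam : 0 < lam <= lam2) (Halpha : 0 <= alpha <= 1)
  (Hsol : is_solution a11 a12 a21 a22 b1 b2 lam alpha tau x1 x2)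
  (HT : in_Theta0 b1 b2 x1 x2).

Let F1 := delay_rhs (- alpha * lam) a11 a12 b1 x1 x2 x1 (tau / lam).
Let F2 := delay_rhs (- alpha * lam) a21 a22 b2 x1 x2 x2 (tau / lam).

Lemma solution_is_derive t : is_derive x1 t (F1 t) /\ is_derive x2 t (F2 t).
Proof. apply Hsol. Qed.

Lemma solution_periodic :
  (forall t, x1 (t + 2 * PI) = x1 t) /\ (forall t, x2 (t + 2 * PI) = x2 t).
Proof. destruct Hsol as [[_ [H1 _]] [[_ [H2 _]] _]]; auto. Qed.

Lemma solution_crosses_zero :
  ((exists u, x1 u <= 0) /\ (exists v, 0 <= x1 v)) /\
  ((exists u, x2 u <= 0) /\ (exists v, 0 <= x2 v)).
Proof.
  pose proof PI_RGT_0.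
  destruct Hsol as [[Hc1 [_ [HI1 _]]] [[Hc2 [_ [HI2 _]]] _]].
  split; apply (RInt_eq0_crossing _ 0 (2 * PI)); auto; lra.
Qed.

Lemma solution_shift_pos t : 0 < b1 + x1 t /\ 0 < b2 + x2 t.
Proof.
  destruct solution_periodic as [Hp1 Hp2]; pose proof PI_RGT_0.
  destruct (periodic_range x1 (2 * PI) ltac:(lra) Hp1 t) as [u [Hu ->]].
  destruct (periodic_range x2 (2 * PI) ltac:(lra) Hp2 t) as [v [Hv ->]].
  destruct (HT u Hu), (HT v Hv); lra.
Qed.

Lemma solution_log_slope_le t :
  - alpha * lam * (a11 * x1 (t - tau / lam) + a12 * x2 (t - tau / lam))
    <= log_slope_bound /\
  - alpha * lam * (a21 * x1 (t - tau / lam) + a22 * x2 (t - tau / lam))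
    <= log_slope_bound.
Proof.
  destruct (solution_shift_pos (t - tau / lam)) as [H1 H2].
  assert (Hk : 0 <= alpha * lam <= lam2) by nra.
  set (S1 := a11 * b1 + a12 * b2); set (S2 := a21 * b1 + a22 * b2).
  assert (HL1 : - S1 <= a11 * x1 (t - tau / lam) + a12 * x2 (t - tau / lam))
    by (unfold S1; nra).
  assert (HL2 : - S2 <= a21 * x1 (t - tau / lam) + a22 * x2 (t - tau / lam))
    by (unfold S2; nra).
  assert (0 <= S1 /\ 0 <= S2) by (unfold S1, S2; split; nra).
  unfold log_slope_bound; fold S1 S2; split; nra.
Qed.

Lemma solution_exp_bounds t :
  b1 * exp (- (2 * PI * log_slope_bound)) <= b1 + x1 t
    <= b1 * exp (2 * PI * log_slope_bound) /\
  b2 * exp (- (2 * PI * log_slope_bound)) <= b2 + x2 t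
    <= b2 * exp (2 * PI * log_slope_bound).
Proof.
  destruct solution_periodic as [Hp1 Hp2].
  destruct solution_crosses_zero as [[[u1 Hu1] [v1 Hv1]] [[u2 Hu2] [v2 Hv2]]].
  pose proof PI_RGT_0; pose proof log_slope_bound_ge0.
  split.
  - apply (periodic_log_crossing_bounds x1
      (fun r => - alpha * lam * (a11 * x1 (r - tau / lam) + a12 * x2 (r - tau / lam)))
      _ _ _ u1 v1); auto; try lra.
    + intro r; apply solution_shift_pos.
    + intro r; apply solution_is_derive.
    + intro r; apply solution_log_slope_le.
  - apply (periodic_log_crossing_bounds x2
      (fun r => - alpha * lam * (a21 * x1 (r - tau / lam) + a22 * x2 (r - tau / lam)))
      _ _ _ u2 v2); auto; try lra.
    + intro r; apply solution_shift_pos.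
    + intro r; apply solution_is_derive.
    + intro r; apply solution_log_slope_le.
Qed.

Lemma solution_abs_le t :
  Rabs (x1 t) <= sol_bound /\ Rabs (x2 t) <= sol_bound /\
  Rabs (b1 + x1 t) <= sol_bound /\ Rabs (b2 + x2 t) <= sol_bound.
Proof.
  destruct (solution_exp_bounds t) as [[_ H1] [_ H2]].
  destruct (solution_shift_pos t).
  pose proof exp_log_slope_ge1; unfold sol_bound.
  repeat split; apply Rabs_le_between; split; nra.
Qed.

Lemma solution_Derive t : Derive x1 t = F1 t /\ Derive x2 t = F2 t.
Proof. split; apply is_derive_unique, solution_is_derive. Qed.

Lemma solution_Derive_le t :
  Rabs (Derive x1 t) <= deriv_bound /\ Rabs (Derive x2 t) <= deriv_bound.
Proof.
  destruct (solution_Derive t) as [-> ->].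
  assert (Rabs (- alpha * lam) <= lam2) by (apply Rabs_le; split; nra).
  destruct (solution_abs_le (t - tau / lam)) as [? [? _]].
  destruct (solution_abs_le t) as [_ [_ [? ?]]].
  unfold deriv_bound; split; apply Rabs_delay_rhs_le; auto; unfold coef_sum; lra.
Qed.

Lemma solution_Derive2 t :
  ex_derive (Derive x1) t /\ ex_derive (Derive x2) t /\
  Rabs (Derive (Derive x1) t) <= deriv2_bound /\
  Rabs (Derive (Derive x2) t) <= deriv2_bound.
Proof.
  assert (Hex : forall r, ex_derive x1 r /\ ex_derive x2 r).
  { intro r; destruct (solution_is_derive r); split; eexists; eassumption. }
  assert (E1 : forall r, F1 r = Derive x1 r) by (intro r; symmetry; apply solution_Derive).
  assert (E2 : forall r, F2 r = Derive x2 r) by (intro r; symmetry; apply solution_Derive).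
  assert (Rabs (- alpha * lam) <= lam2) by (apply Rabs_le; split; nra).
  destruct (Hex (t - tau / lam)), (Hex t).
  destruct (solution_abs_le (t - tau / lam)) as [? [? _]].
  destruct (solution_abs_le t) as [_ [_ [? ?]]].
  destruct (solution_Derive_le (t - tau / lam)), (solution_Derive_le t).
  rewrite <- (Derive_ext _ _ t E1), <- (Derive_ext _ _ t E2).
  repeat split.
  - apply (ex_derive_ext F1 _ t E1); eexists; apply is_derive_delay_rhs; auto.
  - apply (ex_derive_ext F2 _ t E2); eexists; apply is_derive_delay_rhs; auto.
  - apply Rabs_Derive_delay_rhs_le; auto; unfold coef_sum; lra.
  - apply Rabs_Derive_delay_rhs_le; auto; unfold coef_sum; lra.
Qed.

Lemma solution_abs_halve m :
  alpha * contraction_rate <= / 2 ->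
  (forall t, Rabs (x1 t) <= m /\ Rabs (x2 t) <= m) ->
  forall t, Rabs (x1 t) <= m / 2 /\ Rabs (x2 t) <= m / 2.
Proof.
  intros Hrate Hm t.
  assert (Hm0 : 0 <= m) by (destruct (Hm 0); pose proof (Rabs_pos (x1 0)); lra).
  set (S := alpha * lam2 * (coef_sum * m) * sol_bound).
  assert (HS : 2 * PI * S <= m / 2).
  { replace (2 * PI * S) with (alpha * contraction_rate * m)
      by (unfold S, contraction_rate; ring).
    nra. }
  assert (HF : forall r, Rabs (F1 r) <= S /\ Rabs (F2 r) <= S).
  { intro r; destruct (Hm (r - tau / lam)).
    destruct (solution_abs_le r) as [_ [_ [? ?]]].
    assert (Rabs (- alpha * lam) <= alpha * lam2) by (apply Rabs_le; split; nra).
    split; apply Rabs_delay_rhs_le; auto; unfold coef_sum; lra. }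
  assert (HF1 : forall r, F1 r <= S) by (intro r; eapply Rle_trans; [apply Rle_abs | apply HF]).
  assert (HF2 : forall r, F2 r <= S) by (intro r; eapply Rle_trans; [apply Rle_abs | apply HF]).
  assert (HS0 : 0 <= S) by (destruct (HF 0); pose proof (Rabs_pos (F1 0)); lra).
  assert (HP : 0 < 2 * PI) by (pose proof PI_RGT_0; lra).
  destruct solution_periodic as [Hp1 Hp2].
  destruct solution_crosses_zero as [[[u1 Hu1] [v1 Hv1]] [[u2 Hu2] [v2 Hv2]]].
  pose proof (periodic_crossing_bounds x1 F1 _ _ _ u1 v1 HP HS0 Hp1
                (fun r => proj1 (solution_is_derive r)) HF1 Hu1 Hv1 t).
  pose proof (periodic_crossing_bounds x2 F2 _ _ _ u2 v2 HP HS0 Hp2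
                (fun r => proj2 (solution_is_derive r)) HF2 Hu2 Hv2 t).
  split; apply Rabs_le; lra.
Qed.

Lemma solution_eq0 :
  alpha * contraction_rate <= / 2 -> forall t, x1 t = 0 /\ x2 t = 0.
Proof.
  intros Hrate t.
  set (Q := fun m => forall r, Rabs (x1 r) <= m /\ Rabs (x2 r) <= m).
  assert (HQ : Q sol_bound) by (intro r; destruct (solution_abs_le r) as [? [? _]]; auto).
  assert (Hhalf : forall m, Q m -> Q (m / 2))
    by (intros m Hm; exact (solution_abs_halve m Hrate Hm)).
  split; apply (halving_bound_eq0 Q sol_bound); auto; intros m Hm; apply Hm.
Qed.

End Solution.

Lemma solution_a_priori_bounds (lam1 : R) :
  0 < lam1 ->
  exists m0 d1 d2 d3 d4 : R,
     0 < m0 /\ 0 < d1 /\ 0 < d2 /\ 0 < d3 /\ 0 < d4 /\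
     forall (lam alpha tau : R) (x1 x2 : R -> R),
       lam1 <= lam <= lam2 -> 0 <= alpha <= 1 -> 1 <= tau ->
       is_solution a11 a12 a21 a22 b1 b2 lam alpha tau x1 x2 ->
       in_Theta0 b1 b2 x1 x2 ->
       supnorm_lt (Derive x1) m0 /\ supnorm_lt (Derive x2) m0 /\
       (forall t, ex_derive (Derive x1) t /\ ex_derive (Derive x2) t) /\
       supnorm_lt (Derive (Derive x1)) m0 /\
       supnorm_lt (Derive (Derive x2)) m0 /\
       (forall t, 0 <= t <= 2 * PI ->
          -b1 < -d1 /\ -d1 < x1 t /\ x1 t < d3 /\
          -b2 < -d2 /\ -d2 < x2 t /\ x2 t < d4).
Proof.
  intros Hlam1.
  set (E := exp (2 * PI * log_slope_bound)).
  set (e := exp (- (2 * PI * log_slope_bound))).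
  assert (HE : 1 <= E) by apply exp_log_slope_ge1.
  assert (He : 0 < e <= 1).
  { split; [apply exp_pos|]; rewrite <- exp_0; apply exp_le_exp.
    pose proof PI_RGT_0; pose proof log_slope_bound_ge0; nra. }
  destruct deriv_bounds_ge0 as [HD1 HD2].
  exists (deriv_bound + deriv2_bound + 1),
    (b1 - b1 * e / 2), (b2 - b2 * e / 2), (b1 * E), (b2 * E).
  do 5 (split; [nra|]).
  intros lam alpha tau x1 x2 Hlam Halpha _ Hsol HT.
  assert (Hlam' : 0 < lam <= lam2) by lra.
  pose proof (solution_Derive_le lam alpha tau x1 x2 Hlam' Halpha Hsol HT) as HD.
  pose proof (solution_Derive2 lam alpha tau x1 x2 Hlam' Halpha Hsol HT) as HDD.
  pose proof (solution_exp_bounds lam alpha tau x1 x2 Hlam' Halpha Hsol HT) as Hx.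
  fold E e in Hx.
  split; [apply (supnorm_lt_of_le _ deriv_bound); [apply HD | lra]|].
  split; [apply (supnorm_lt_of_le _ deriv_bound); [apply HD | lra]|].
  split; [intro t; split; apply HDD|].
  split; [apply (supnorm_lt_of_le _ deriv2_bound); [apply HDD | lra]|].
  split; [apply (supnorm_lt_of_le _ deriv2_bound); [apply HDD | lra]|].
  intros t _; destruct (Hx t) as [[Hx1lo Hx1hi] [Hx2lo Hx2hi]].
  repeat split; nra.
Qed.

Lemma contraction_rate_pos : 0 < contraction_rate.
Proof.
  assert (0 < coef_sum) by (unfold coef_sum; lra).
  pose proof PI_RGT_0; pose proof sol_bound_pos.
  unfold contraction_rate.
  repeat (apply Rmult_lt_0_compat; try assumption); lra.
Qed.

Lemma solution_trivial_small_alpha (lam1 : R) :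
  0 < lam1 ->
  exists alpha0 : R, 0 < alpha0 < 1 /\
     forall (lam alpha tau : R) (x1 x2 : R -> R),
       lam1 <= lam <= lam2 -> 0 <= alpha <= alpha0 -> 1 <= tau ->
       is_solution a11 a12 a21 a22 b1 b2 lam alpha tau x1 x2 ->
       in_Theta0 b1 b2 x1 x2 ->
       forall t, x1 t = 0 /\ x2 t = 0.
Proof.
  intros Hlam1.
  pose proof contraction_rate_pos as Hrate.
  set (alpha0 := / (2 * (contraction_rate + 1))).
  assert (Halpha0 : alpha0 * (2 * (contraction_rate + 1)) = 1)
    by (unfold alpha0; field; lra).
  assert (Halpha0_pos : 0 < alpha0) by (unfold alpha0; apply Rinv_0_lt_compat; lra).
  assert (Halpha0_lt1 : alpha0 < 1) by nra.
  exists alpha0; split; [lra|].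
  intros lam alpha tau x1 x2 Hlam Halpha _ Hsol HT.
  apply (solution_eq0 lam alpha tau x1 x2); [lra | lra | assumption | assumption | nra].
Qed.

End APrioriBounds.

Theorem lemma3p1 (a11 a12 a21 a22 b1 b2 : R) :
  0 < a11 -> 0 < a12 -> 0 < a21 -> 0 < a22 -> 0 < b1 -> 0 < b2 ->
  cond_A1 a11 a12 a21 a22 -> cond_A2 a11 a12 a21 a22 b1 b2 ->
  forall lam1 lam2 : R, 0 < lam1 -> 0 < lam2 -> lam1 < lam2 ->
  (exists m0 d1 d2 d3 d4 : R,
     0 < m0 /\ 0 < d1 /\ 0 < d2 /\ 0 < d3 /\ 0 < d4 /\
     forall (lam alpha tau : R) (x1 x2 : R -> R),
       lam1 <= lam <= lam2 -> 0 <= alpha <= 1 -> 1 <= tau ->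
       is_solution a11 a12 a21 a22 b1 b2 lam alpha tau x1 x2 ->
       in_Theta0 b1 b2 x1 x2 ->
       supnorm_lt (Derive x1) m0 /\ supnorm_lt (Derive x2) m0 /\
       (forall t, ex_derive (Derive x1) t /\ ex_derive (Derive x2) t) /\
       supnorm_lt (Derive (Derive x1)) m0 /\
       supnorm_lt (Derive (Derive x2)) m0 /\
       (forall t, 0 <= t <= 2 * PI ->
          -b1 < -d1 /\ -d1 < x1 t /\ x1 t < d3 /\
          -b2 < -d2 /\ -d2 < x2 t /\ x2 t < d4))
  /\
  (exists alpha0 : R, 0 < alpha0 < 1 /\
     forall (lam alpha tau : R) (x1 x2 : R -> R),
       lam1 <= lam <= lam2 -> 0 <= alpha <= alpha0 -> 1 <= tau ->
       is_solution a11 a12 a21 a22 b1 b2 lam alpha tau x1 x2 ->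
       in_Theta0 b1 b2 x1 x2 ->
       forall t, x1 t = 0 /\ x2 t = 0).
Proof.
  intros Ha11 Ha12 Ha21 Ha22 Hb1 Hb2 _ _ lam1 lam2 Hlam1 Hlam2 _.
  split.
  - apply solution_a_priori_bounds; assumption.
  - apply solution_trivial_small_alpha; assumption.
Qed.
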